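(* Let $\Omega\subset\mathbb R^d$ be a bounded Borel set, $f:\Omega\to[0,\infty)$ with $\int_\Omega f=1$, $p\ge1$, $x_1,x_2\in\Omega$, $h_1,h_2:[0,1]\to[0,\infty)$ continuous and non-decreasing, and $\kappa\in\mathbb N$, $\kappa\ge1$. Assume $G$ is Lipschitz with constant $L<\kappa$. Let $t_1,\dots,t_\kappa\in\mathbb R$ be arbitrary and define for $n\ge\kappa$ $$t_{n+1}=\frac1\kappa\sum_{m=n-\kappa+1}^nG(t_m),$$ and for $n>\kappa$ let $\psi_n(x)=0$ if $\tau(x)<t_n$ and $\psi_n(x)=1$ otherwise. Then $t_n\to\bar t$ and $\psi_n\to\bar\psi$ uniformly on every compact subset of $\Omega\setminus\{\tau=\bar t\}$.
   Context: $\tau(x)=|x-x_1|^p-|x-x_2|^p$, $m(t)=\int_{\{x\in\Omega:\tau(x)<t\}}f\,dx$, $G(t)=h_2(1-m(t))-h_1(m(t))$ (the difference between queue times at $x_2$ and $x_1$ when mass $m(t)$ goes to $x_1$). There is a unique $\bar t$ with $G(\bar t)=\bar t$, and $\bar\psi(x)=0$ if $\tau(x)<\bar t$, $\bar\psi(x)=1$ if $\tau(x)>\bar t$ (the unique equilibrium). *)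

From HB Require Import structures.
From mathcomp Require Import all_boot all_order all_algebra.
From mathcomp Require Import all_classical all_reals all_analysis.
Set Implicit Arguments. Unset Strict Implicit. Unset Printing Implicit Defensive.
Import Order.TTheory GRing.Theory Num.Theory.
Import numFieldNormedType.Exports.
Local Open Scope classical_set_scope.
Local Open Scope ring_scope.

(* Points of R^d are row vectors 'rV[R]_d (carrying the product = Euclidean
   topology from matrix_topology). *)

(* coordinates as a d-tuple; the d-tuple type carries the product Borel
   sigma-algebra (generated by the coordinate projections). *)
Definition rv2tuple (R : realType) (d : nat) (x : 'rV[R]_d) : d.-tuple R :=
  [tuple x ord0 i | i < d].

Definition Rd (R : realType) (d : nat) :=
  g_sigma_algebra_preimageType (@rv2tuple R d).

(* Euclidean norm |x| on R^d (the library norm on 'rV is the sup norm). *)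
Definition enorm (R : realType) (d : nat) (x : 'rV[R]_d) : R :=
  Num.sqrt (\sum_(i < d) (x ord0 i) ^+ 2).

(* mu is the (Borel) Lebesgue measure on R^d: it gives every closed box its
   volume (this determines the measure on Borel sets uniquely). *)
Definition is_lebesgue_Rd (R : realType) (d : nat)
    (mu : {measure set (Rd R d) -> \bar R}) : Prop :=
  forall a b : 'rV[R]_d, (forall i, a ord0 i <= b ord0 i) ->
    mu [set x : Rd R d | forall i, a ord0 i <= x ord0 i <= b ord0 i]
    = (\prod_(i < d) (b ord0 i - a ord0 i))%:E.

Definition tau (R : realType) (d : nat) (p : R) (x1 x2 : 'rV[R]_d)
    (x : 'rV[R]_d) : R :=
  powR (enorm (x - x1)) p - powR (enorm (x - x2)) p.

Definition mass (R : realType) (d : nat) (mu : {measure set (Rd R d) -> \bar R})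
    (Omega : set 'rV[R]_d) (f : 'rV[R]_d -> R) (p : R) (x1 x2 : 'rV[R]_d)
    (t : R) : R :=
  fine (\int[mu]_(x in [set x : Rd R d | Omega x /\ (tau p x1 x2 x < t)%R])
          (f x)%:E)%E.

Definition Gq (R : realType) (d : nat) (mu : {measure set (Rd R d) -> \bar R})
    (Omega : set 'rV[R]_d) (f : 'rV[R]_d -> R) (p : R) (x1 x2 : 'rV[R]_d)
    (h1 h2 : R -> R) (t : R) : R :=
  h2 (1 - mass mu Omega f p x1 x2 t) - h1 (mass mu Omega f p x1 x2 t).

Definition profile (R : realType) (d : nat) (p : R) (x1 x2 : 'rV[R]_d)
    (s : R) (x : 'rV[R]_d) : R :=
  if tau p x1 x2 x < s then 0 else 1.

From HB Require Import structures.
From mathcomp Require Import all_boot all_order all_algebra.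
From mathcomp Require Import all_classical all_reals all_analysis.
From mathcomp Require Import ring lra zify.
Import Order.TTheory GRing.Theory Num.Theory.
Import numFieldNormedType.Exports.
Set Implicit Arguments. Unset Strict Implicit. Unset Printing Implicit Defensive.
Local Open Scope classical_set_scope.
Local Open Scope ring_scope.

(* Subtracting two consecutive instances of the recursion gives
     t_{n+2} = t_{n+1} + (G t_{n+1} - G t_{n+1-kappa}) / kappa.
   As G is nonincreasing and L-Lipschitz with L < kappa, a lower bound m valid
   on kappa + 1 consecutive terms stays valid forever, and t_{n+1+i} - m decays
   at most like c^i (t_{n+1} - m) with c = 1 - L/kappa; symmetrically for upper
   bounds.  So every invariant interval [m, M] shrinks by the fixed factor
   1 - c^(kappa+1)/2 after kappa + 1 steps, and since the fixed point tbar of G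
   lies in all of them, t_n -> tbar.  On a compact K avoiding {tau = tbar},
   continuity of tau gives delta > 0 with |tau - tbar| >= delta on K, and once
   |t_n - tbar| < delta the profiles at t_n and at tbar agree on K. *)

Definition contraction_rate (R : realType) (kappa : nat) (L : R) : R :=
  1 - L / kappa%:R.

Section LowerBounds.
Variables (R : realType) (G : R -> R) (kappa : nat) (L : R) (t : nat -> R).
Hypothesis kappa_gt0 : (0 < kappa)%N.
Hypothesis L_ge0 : 0 <= L.
Hypothesis L_lt_kappa : L < kappa%:R.
Hypothesis G_nonincr : {homo G : x y / x <= y >-> y <= x}.
Hypothesis G_lip : forall x y, `|G x - G y| <= L * `|x - y|.
Hypothesis t_rec : forall n, (kappa <= n)%N ->
  t n.+1 = kappa%:R^-1 * \sum_(n - kappa + 1 <= m < n.+1) G (t m).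

Local Notation c := (contraction_rate kappa L).

Lemma contraction_rate_gt0 : 0 < c.
Proof. by rewrite subr_gt0 ltr_pdivrMr ?ltr0n // mul1r. Qed.

Lemma contraction_rate_le1 : c <= 1.
Proof. by rewrite gerBl divr_ge0 // ler0n. Qed.

Lemma t_increment n : (kappa <= n)%N ->
  t n.+2 = t n.+1 + (G (t n.+1) - G (t (n.+1 - kappa))) / kappa%:R.
Proof.
move=> kn; rewrite (t_rec (leqW kn)) {1}(t_rec kn) !addn1 subSn //.
have lt_nk : ((n - kappa).+1 < n.+1)%N.
  by rewrite ltnS ltn_subrL kappa_gt0 (leq_trans kappa_gt0 kn).
by rewrite (big_ltn lt_nk) (big_nat_recr _ _ _ lt_nk) /=; ring.
Qed.

Lemma G_increment_ge m u v : m <= u -> m <= v -> - (L * (u - m)) <= G u - G v.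
Proof.
move=> mu mv; have [vu|uv] := leP v u.
  have := G_lip v u.
  rewrite distrC (distrC v) (ger0_norm (_ : 0 <= u - v)) ?subr_ge0 //.
  have : L * (u - v) <= L * (u - m) by rewrite ler_wpM2l // lerB.
  have := ler_norm (- (G u - G v)); rewrite normrN; lra.
have := G_nonincr (ltW uv); have : 0 <= L * (u - m) by rewrite mulr_ge0 // subr_ge0.
lra.
Qed.

Lemma lower_step n m : (kappa <= n)%N -> m <= t n.+1 -> m <= t (n.+1 - kappa) ->
  c * (t n.+1 - m) <= t n.+2 - m.
Proof.
move=> kn m1 m2; have k0 : 0 < kappa%:R :> R by rewrite ltr0n.
have hD : - (L * (t n.+1 - m)) / kappa%:R <=
          (G (t n.+1) - G (t (n.+1 - kappa))) / kappa%:R.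
  by rewrite ler_pM2r ?invr_gt0 // G_increment_ge.
have -> : c * (t n.+1 - m) = t n.+1 - m + - (L * (t n.+1 - m)) / kappa%:R.
  by rewrite /contraction_rate; field; rewrite gt_eqF.
rewrite (t_increment kn); lra.
Qed.

Lemma lower_bound_propagates n m : (kappa <= n)%N ->
  (forall j, (n.+1 - kappa <= j <= n.+1)%N -> m <= t j) ->
  forall j, (n.+1 - kappa <= j)%N -> m <= t j.
Proof.
move=> kn win; elim/ltn_ind => j IH hj.
have [jn|nj] := leqP j n.+1; first by apply: win; rewrite hj jn.
have ki : (kappa <= j.-2)%N by lia.
have -> : j = j.-2.+2 by lia.
have m1 : m <= t j.-2.+1 by apply: IH; lia.
have m2 : m <= t (j.-2.+1 - kappa) by apply: IH; lia.
have := lower_step ki m1 m2.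
have : 0 <= c * (t j.-2.+1 - m).
  by apply: mulr_ge0; [exact: ltW contraction_rate_gt0 | rewrite subr_ge0].
lra.
Qed.

Lemma lower_bound_geometric n m : (kappa <= n)%N ->
  (forall j, (n.+1 - kappa <= j)%N -> m <= t j) ->
  forall i, c ^+ i * (t n.+1 - m) <= t (n.+1 + i) - m.
Proof.
move=> kn lb; elim=> [|i IH]; first by rewrite expr0 mul1r addn0.
have kni : (kappa <= n + i)%N by lia.
have step := lower_step kni (lb (n + i).+1 ltac:(lia))
  (lb ((n + i).+1 - kappa)%N ltac:(lia)).
rewrite addnS -addSn exprS -mulrA; apply: le_trans step.
by rewrite -addSn ler_wpM2l // ltW // contraction_rate_gt0.
Qed.

Lemma lower_bound_improves n m : (kappa <= n)%N ->
  (forall j, (n.+1 - kappa <= j)%N -> m <= t j) ->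
  forall j, (n.+2 <= j)%N -> m + c ^+ kappa.+1 * (t n.+1 - m) <= t j.
Proof.
move=> kn lb; have c0 := contraction_rate_gt0; have c1 := contraction_rate_le1.
have gap : 0 <= t n.+1 - m by rewrite subr_ge0 lb //; lia.
suff prop : forall j, ((n + kappa).+2 - kappa <= j)%N ->
    m + c ^+ kappa.+1 * (t n.+1 - m) <= t j.
  by move=> j hj; apply: prop; lia.
apply: lower_bound_propagates; first lia.
move=> j /andP[j1 j2]; have -> : j = (n.+1 + (j - n.+1))%N by lia.
have := lower_bound_geometric kn lb (j - n.+1).
have : c ^+ kappa.+1 * (t n.+1 - m) <= c ^+ (j - n.+1) * (t n.+1 - m).
  by rewrite ler_wpM2r //; apply: ler_wiXn2l => //; [exact: ltW | lia].
lra.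
Qed.

Lemma lower_bound_le_fixpoint n m tbar : G tbar = tbar -> (kappa <= n)%N ->
  (forall j, (n.+1 - kappa <= j)%N -> m <= t j) -> m <= tbar.
Proof.
move=> Gfix kn lb; rewrite leNgt; apply/negP => tbar_lt.
suff : t n.+1 <= tbar by rewrite leNgt (lt_le_trans tbar_lt) ?lb ?leq_subr.
have k0 : kappa%:R != 0 :> R by rewrite pnatr_eq0 -lt0n.
rewrite (t_rec kn) -(mulKf k0 tbar).
rewrite ler_wpM2l ?invr_ge0 ?ler0n //.
have -> : kappa%:R * tbar = \sum_(n - kappa + 1 <= j < n.+1) tbar.
  by rewrite sumr_const_nat mulr_natl addn1 subSS subKn.
apply: ler_sum_nat => j /andP[j1 j2]; rewrite -[X in _ <= X]Gfix; apply: G_nonincr.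
by apply/ltW/(lt_le_trans tbar_lt)/lb; rewrite subSn // -addn1.
Qed.

End LowerBounds.

Section Windows.
Variables (R : realType) (G : R -> R) (kappa : nat) (L : R) (t : nat -> R) (tbar : R).
Hypothesis kappa_gt0 : (0 < kappa)%N.
Hypothesis L_ge0 : 0 <= L.
Hypothesis L_lt_kappa : L < kappa%:R.
Hypothesis G_nonincr : {homo G : x y / x <= y >-> y <= x}.
Hypothesis G_lip : forall x y, `|G x - G y| <= L * `|x - y|.
Hypothesis G_fix : G tbar = tbar.
Hypothesis t_rec : forall n, (kappa <= n)%N ->
  t n.+1 = kappa%:R^-1 * \sum_(n - kappa + 1 <= m < n.+1) G (t m).

Local Notation c := (contraction_rate kappa L).

(* Upper bounds of [t] are lower bounds of the reflected system
   [x |-> - G (- x)], [- t], which satisfies the same hypotheses. *)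
Lemma reflected_nonincr : {homo (fun x => - G (- x)) : x y / x <= y >-> y <= x}.
Proof. by move=> x y xy; rewrite lerN2 G_nonincr // lerN2. Qed.

Lemma reflected_lip x y : `|- G (- x) - - G (- y)| <= L * `|x - y|.
Proof.
by rewrite opprK addrC; apply: le_trans (G_lip _ _) _; rewrite opprK addrC.
Qed.

Lemma reflected_rec n : (kappa <= n)%N ->
  - t n.+1 = kappa%:R^-1 * \sum_(n - kappa + 1 <= m < n.+1) - G (- - t m).
Proof.
move=> kn; rewrite (t_rec kn) sumrN mulrN.
by congr (- (_ * _)); apply: eq_bigr => i _; rewrite opprK.
Qed.

Lemma upper_bound_improves n M : (kappa <= n)%N ->
  (forall j, (n.+1 - kappa <= j)%N -> t j <= M) ->
  forall j, (n.+2 <= j)%N -> t j <= M - c ^+ kappa.+1 * (M - t n.+1).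
Proof.
move=> kn ub j hj.
have lb i : (n.+1 - kappa <= i)%N -> - M <= - t i by move/ub; rewrite lerN2.
have := lower_bound_improves kappa_gt0 L_ge0 L_lt_kappa reflected_nonincr
  reflected_lip reflected_rec kn lb hj.
have -> : - t n.+1 - - M = M - t n.+1 by rewrite opprK addrC.
lra.
Qed.

Lemma upper_bound_ge_fixpoint n M : (kappa <= n)%N ->
  (forall j, (n.+1 - kappa <= j)%N -> t j <= M) -> tbar <= M.
Proof.
move=> kn ub; rewrite -lerN2.
apply: (lower_bound_le_fixpoint kappa_gt0 reflected_nonincr reflected_rec _ kn).
  by rewrite opprK G_fix.
by move=> j /ub; rewrite lerN2.
Qed.

Lemma upper_bound_propagates n M : (kappa <= n)%N ->
  (forall j, (n.+1 - kappa <= j <= n.+1)%N -> t j <= M) ->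
  forall j, (n.+1 - kappa <= j)%N -> t j <= M.
Proof.
move=> kn win j hj; rewrite -lerN2.
apply: (lower_bound_propagates kappa_gt0 L_ge0 L_lt_kappa reflected_nonincr
  reflected_lip reflected_rec kn) hj => i /win; by rewrite lerN2.
Qed.

Lemma initial_window : exists m M, forall j, (0 < j)%N -> m <= t j <= M.
Proof.
pose B := \big[Num.max/0]_(j < kappa.+2) `|t j|.
have tB j : (j <= kappa.+1)%N -> - B <= t j <= B.
  move=> jk; rewrite -ler_norml.
  exact: (le_bigmax _ _ (Ordinal (jk : (j < kappa.+2)%N))).
have k1 : (kappa.+1 - kappa = 1)%N by lia.
exists (- B), B => j; rewrite -k1 => hj; apply/andP; split.
- by apply: (lower_bound_propagates kappa_gt0 L_ge0 L_lt_kappa G_nonincr G_lip t_rec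
    (leqnn _) _ hj) => i /andP[_ /tB] /andP[].
- by apply: (upper_bound_propagates (leqnn _) _ hj) => i /andP[_ /tB] /andP[].
Qed.

Local Notation q := (1 - c ^+ kappa.+1 / 2).

(* Whichever half of [m, M] contains [t n.+1], after [kappa + 1] more steps the
   far end of the window has moved in by at least [c ^+ kappa.+1 * (M - m) / 2]. *)
Lemma window_contracts n m M : (kappa <= n)%N ->
  (forall j, (n.+1 - kappa <= j)%N -> m <= t j <= M) ->
  exists n' m' M', [/\ (kappa <= n')%N, M' - m' <= q * (M - m) &
    forall j, (n'.+1 - kappa <= j)%N -> m' <= t j <= M'].
Proof.
move=> kn win.
have lb j : (n.+1 - kappa <= j)%N -> m <= t j by move/win/andP=> [].
have ub j : (n.+1 - kappa <= j)%N -> t j <= M by move/win/andP=> [].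
have /andP[mt tM] := win n.+1 (leq_subr _ _).
have a0 : 0 <= c ^+ kappa.+1 by rewrite exprn_ge0 // ltW // contraction_rate_gt0.
exists (n + kappa).+1; have -> : ((n + kappa).+2 - kappa = n.+2)%N by lia.
have [mid|mid] := leP ((m + M) / 2) (t n.+1).
- exists (m + c ^+ kappa.+1 * (t n.+1 - m)), M; split; first lia.
    have : c ^+ kappa.+1 * ((M - m) / 2) <= c ^+ kappa.+1 * (t n.+1 - m).
      by rewrite ler_wpM2l //; lra.
    lra.
  move=> j hj; rewrite (lower_bound_improves kappa_gt0 L_ge0 L_lt_kappa G_nonincr
    G_lip t_rec kn lb) //.
  by rewrite ub //; lia.
- exists m, (M - c ^+ kappa.+1 * (M - t n.+1)); split; first lia.
    have : c ^+ kappa.+1 * ((M - m) / 2) <= c ^+ kappa.+1 * (M - t n.+1).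
      by rewrite ler_wpM2l //; lra.
    lra.
  move=> j hj; rewrite (upper_bound_improves kn ub) // ?andbT lb //; lia.
Qed.

Lemma window_ratio_ge0 : 0 <= q.
Proof.
have : c ^+ kappa.+1 <= 1.
  by rewrite exprn_ile1 ?contraction_rate_le1 // ltW // contraction_rate_gt0.
lra.
Qed.

Lemma window_ratio_lt1 : q < 1.
Proof. by rewrite gtrBl divr_gt0 // exprn_gt0 // contraction_rate_gt0. Qed.

Lemma windows_shrink : exists D, forall K, exists n m M,
  [/\ (kappa <= n)%N, M - m <= q ^+ K * D &
    forall j, (n.+1 - kappa <= j)%N -> m <= t j <= M].
Proof.
have [m [M win]] := initial_window.
exists (M - m); elim=> [|K [n [m' [M' [kn w win']]]]].
  exists kappa, m, M; split; rewrite ?expr0 ?mul1r // => j hj; apply: win; lia.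
have [n'' [m'' [M'' [kn' w' win'']]]] := window_contracts kn win'.
exists n'', m'', M''; split => //; apply: (le_trans w').
by rewrite [q ^+ K.+1]exprS -mulrA ler_wpM2l // window_ratio_ge0.
Qed.

Lemma t_cvg_fixpoint : t @ \oo --> tbar.
Proof.
have [D shrink] := windows_shrink.
have qK0 : q ^+ K * D @[K --> \oo] --> 0.
  rewrite -(mul0r D); apply: cvgM; last exact: cvg_cst.
  by apply: cvg_expr; rewrite ger0_norm ?window_ratio_ge0 ?window_ratio_lt1.
apply/cvgrPdist_lt => e e0.
have [K _ /(_ K (leqnn K))] := proj1 (cvgrPdist_lt _ _) qK0 e e0.
rewrite sub0r normrN => /(le_lt_trans (ler_norm _)) small.
have [n [m [M [kn w win]]]] := shrink K.
have tm : m <= tbar.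
  apply: (lower_bound_le_fixpoint kappa_gt0 G_nonincr t_rec G_fix kn).
  by move=> j /win /andP[].
have tM : tbar <= M by apply: (upper_bound_ge_fixpoint kn) => j /win /andP[].
near=> j; have /andP[mj jM] : m <= t j <= M.
  by apply: win; near: j; exists (n.+1 - kappa)%N.
rewrite ltr_norml; apply/andP; split; lra.
Unshelve. all: by end_near.
Qed.

End Windows.

(* Unlike [ge0_subset_integral], no measurability is required: the integral of
   a nonnegative function is a supremum over simple functions below it. *)
Lemma ge0_integral_le_subset (dd : measure_display) (T : measurableType dd)
    (R : realType) (mu : {measure set T -> \bar R}) (A B : set T) (f : T -> R) :
  A `<=` B -> (forall x, B x -> 0 <= f x) ->
  (\int[mu]_(x in A) (f x)%:E <= \int[mu]_(x in B) (f x)%:E)%E.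
Proof.
move=> AB f0.
rewrite !ge0_integralE; last 2 first.
- by move=> x ?; rewrite lee_fin f0.
- by move=> x /AB ?; rewrite lee_fin f0.
apply: ereal_sup_le => _ [h /= hf <-]; exists h => //= x.
apply: (le_trans (hf x)); rewrite /patch.
case: ifPn => [/set_mem ?|_]; first by rewrite ifT // inE; apply: AB.
by case: ifPn => // /set_mem ?; rewrite lee_fin f0.
Qed.

Section QueueDifference.
Variables (R : realType) (d : nat) (mu : {measure set (Rd R d) -> \bar R}).
Variables (Omega : set 'rV[R]_d) (f : 'rV[R]_d -> R) (p : R) (x1 x2 : 'rV[R]_d).
Hypothesis f_ge0 : forall x, Omega x -> 0 <= f x.
Hypothesis f_int1 : (\int[mu]_(x in (Omega : set (Rd R d))) (f x)%:E = 1)%E.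

Local Notation m := (mass mu Omega f p x1 x2).
Local Notation sublevel_integral s :=
  (\int[mu]_(x in [set x : Rd R d | Omega x /\ (tau p x1 x2 x < s)%R]) (f x)%:E)%E.

Lemma sublevel_integral_ge0 s : (0 <= sublevel_integral s)%E.
Proof. by apply: integral_ge0 => x [Ox _]; rewrite lee_fin f_ge0. Qed.

Lemma sublevel_integral_le1 s : (sublevel_integral s <= 1)%E.
Proof. by rewrite -f_int1; apply: ge0_integral_le_subset => // x []. Qed.

Lemma sublevel_integral_fin_num s : sublevel_integral s \is a fin_num.
Proof.
rewrite ge0_fin_numE ?sublevel_integral_ge0 //.
exact: le_lt_trans (sublevel_integral_le1 s) (ltry _).
Qed.

Lemma mass_itv s : 0 <= m s <= 1.
Proof.
rewrite fine_ge0 ?sublevel_integral_ge0 //= -lee_fin fineK.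
  exact: sublevel_integral_le1.
exact: sublevel_integral_fin_num.
Qed.

Lemma mass_nondecreasing : {homo m : s s' / s <= s'}.
Proof.
move=> s s' ss'; apply: fine_le; rewrite ?sublevel_integral_fin_num //.
apply: ge0_integral_le_subset => [x [Ox hx]|x [Ox _]]; last exact: f_ge0.
by split=> //; exact: lt_le_trans hx ss'.
Qed.

Lemma Gq_nonincreasing (h1 h2 : R -> R) :
  {in `[0, 1] &, {homo h1 : s s' / s <= s'}} ->
  {in `[0, 1] &, {homo h2 : s s' / s <= s'}} ->
  {homo Gq mu Omega f p x1 x2 h1 h2 : s s' / s <= s' >-> s' <= s}.
Proof.
move=> h1_mono h2_mono s s' ss'; rewrite /Gq.
have /andP[ms0 ms1] := mass_itv s; have /andP[ms'0 ms'1] := mass_itv s'.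
have mm := mass_nondecreasing ss'.
have : h1 (m s) <= h1 (m s') by apply: h1_mono; rewrite ?in_itv /= ?ms0 ?ms1 ?ms'0.
have : h2 (1 - m s') <= h2 (1 - m s).
  by apply: h2_mono; rewrite ?in_itv /=; [apply/andP; split; lra..| lra].
lra.
Qed.

End QueueDifference.

Lemma powR_norm_continuous (R : realType) (p : R) : 1 <= p ->
  continuous (fun u : R => `|u| `^ p).
Proof.
move=> p1 u; have [->|u0] := eqVneq u 0.
  apply/cvgrPdist_lt => e e0; rewrite normr0 powR0 ?gt_eqF //; last lra.
  exists (Num.min 1 e) => [|y /=]; first by rewrite /= lt_min ltr01 e0.
  rewrite !sub0r !normrN lt_min (ger0_norm (powR_ge0 _ _)) => /andP[y1 ye].
  have [->|y0] := eqVneq y 0; first by rewrite normr0 powR0 ?gt_eqF //; lra.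
  by apply: le_lt_trans ye; apply: ge1r_powR => //; rewrite normr_gt0 y0 ltW.
have -> : (fun u : R => `|u| `^ p) = (fun a : R => a `^ p) \o (fun u : R => `|u|) by [].
apply: continuous_comp; first exact: norm_continuous.
apply/differentiable_continuous/derivable1_diffP/derivable_powR.
by rewrite in_itv /= andbT normr_gt0.
Qed.

Lemma enorm_continuous (R : realType) (d : nat) : continuous (@enorm R d).
Proof.
move=> x; apply: continuous_comp; last exact: sqrt_continuous.
apply: (@continuous_big _ _ +%R 0 xpredT add_continuous) => i _ y.
exact: continuousM (@coord_continuous _ _ _ ord0 i y) (@coord_continuous _ _ _ ord0 i y).
Qed.

Lemma tau_continuous (R : realType) (d : nat) (p : R) (x1 x2 : 'rV[R]_d) :
  1 <= p -> continuous (tau p x1 x2).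
Proof.
move=> p1 x.
have powR_enorm (a : 'rV[R]_d) :
    {for x, continuous (fun y : 'rV[R]_d => enorm (y - a) `^ p)}.
  have -> : (fun y : 'rV[R]_d => enorm (y - a) `^ p) =
            (fun u : R => `|u| `^ p) \o (fun y => enorm (y - a)).
    by apply: funext => y /=; rewrite ger0_norm // sqrtr_ge0.
  apply: continuous_comp; last exact: powR_norm_continuous.
  apply: continuous_comp; last exact: enorm_continuous.
  exact: continuousB (@cst_continuous _ _ a x).
exact: continuousB (powR_enorm x1) (powR_enorm x2).
Qed.

Lemma compact_continuous_avoid (T : topologicalType) (R : realType) (g : T -> R)
    (K : set T) (a : R) :
  continuous g -> compact K -> (forall x, K x -> g x <> a) ->
  exists2 del : R, 0 < del & forall x, K x -> del <= `|g x - a|.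
Proof.
move=> gc cK Kg.
have clgK : closed (g @` K).
  apply: compact_closed; first exact: Rhausdorff.
  by apply: continuous_compact => //; exact: continuous_subspaceT.
have /nbhs_ballP[del del0 ball_del] : nbhs a (~` (g @` K)).
  by apply: (closed_openC clgK) => -[x Kx]; exact: Kg.
exists del => // x Kx; rewrite leNgt; apply/negP => gx.
by apply: (ball_del (g x)); [rewrite -ball_normE /= distrC | exists x].
Qed.

Lemma profile_eq_of_dist_lt (R : realType) (d : nat) (p : R) (x1 x2 x : 'rV[R]_d)
    (s s' : R) :
  `|s - s'| < `|tau p x1 x2 x - s'| -> profile p x1 x2 s x = profile p x1 x2 s' x.
Proof.
move=> hs; rewrite /profile; have [lt|ge] := ltP (tau p x1 x2 x) s'.
  rewrite (ltr0_norm (_ : tau p x1 x2 x - s' < 0)) ?subr_lt0 // in hs.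
  by rewrite ifT //; have := ler_norm (s' - s); rewrite distrC; lra.
rewrite (ger0_norm (_ : 0 <= tau p x1 x2 x - s')) ?subr_ge0 // in hs.
rewrite ifF //; apply/negbTE; rewrite -leNgt; have := ler_norm (s - s'); lra.
Qed.

Theorem theorem5p9 (R : realType) (d : nat)
    (mu : {measure set (Rd R d) -> \bar R}) (Hmu : is_lebesgue_Rd mu)
    (Omega : set 'rV[R]_d)
    (HOm : measurable (Omega : set (Rd R d)))
    (HObd : exists M : R, forall x, Omega x -> enorm x <= M)
    (f : 'rV[R]_d -> R)
    (Hfm : measurable_fun (Omega : set (Rd R d)) f)
    (Hf0 : forall x, Omega x -> 0 <= f x)
    (Hf1 : (\int[mu]_(x in (Omega : set (Rd R d))) (f x)%:E = 1)%E)
    (p : R) (Hp : 1 <= p)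
    (x1 x2 : 'rV[R]_d) (Hx1 : Omega x1) (Hx2 : Omega x2)
    (h1 h2 : R -> R)
    (Hh1c : {within `[0, 1], continuous h1})
    (Hh2c : {within `[0, 1], continuous h2})
    (Hh1m : {in `[0, 1] &, {homo h1 : s t / s <= t}})
    (Hh2m : {in `[0, 1] &, {homo h2 : s t / s <= t}})
    (Hh10 : forall s, 0 <= s <= 1 -> 0 <= h1 s)
    (Hh20 : forall s, 0 <= s <= 1 -> 0 <= h2 s)
    (kappa : nat) (Hk : (1 <= kappa)%N)
    (L : R) (HL0 : 0 <= L) (HLk : L < kappa%:R)
    (HG : L.-lipschitz (Gq mu Omega f p x1 x2 h1 h2))
    (tbar : R) (Htbar : Gq mu Omega f p x1 x2 h1 h2 tbar = tbar)
    (t : nat -> R)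
    (Ht : forall n, (kappa <= n)%N ->
       t n.+1 = kappa%:R^-1 *
         \sum_(n - kappa + 1 <= m < n.+1) Gq mu Omega f p x1 x2 h1 h2 (t m)) :
  t @ \oo --> tbar /\
  (forall K : set 'rV[R]_d, compact K -> K `<=` Omega ->
     (forall x, K x -> tau p x1 x2 x <> tbar) ->
     forall e : R, 0 < e ->
       \forall n \near \oo, forall x, K x ->
         `|profile p x1 x2 (t n) x - profile p x1 x2 tbar x| < e).

Proof.
set G := Gq mu Omega f p x1 x2 h1 h2.
have G_nonincr := Gq_nonincreasing p x1 x2 Hf0 Hf1 Hh1m Hh2m.
have G_lip x y : `|G x - G y| <= L * `|x - y| by exact: (HG (x, y)).
have t_cvg := t_cvg_fixpoint Hk HL0 HLk G_nonincr G_lip Htbar Ht.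
split=> // K cK _ K_tau e e0.
have tau_cont := tau_continuous (x1 := x1) (x2 := x2) Hp.
have [del del0 K_del] := compact_continuous_avoid tau_cont cK K_tau.
apply: filterS (proj1 (cvgrPdist_lt _ _) t_cvg del del0) => n t_near x Kx.
rewrite (profile_eq_of_dist_lt (s' := tbar)) ?subrr ?normr0 //.
by rewrite distrC; apply: lt_le_trans t_near (K_del x Kx).
Qed.
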